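(* Let $K$ be a commutative ring with identity, $n\ge 0$, and let $B,C$ be monoids such that $C$ is a retract of $B$, i.e. there are monoid homomorphisms $\psi:B\to C$ and $\phi:C\to B$ with $\psi\phi=\mathrm{id}_C$. If $B$ is left-$FP_n$ (resp. right-$FP_n$, bi-$FP_n$, weak bi-$FP_n$) over $K$, then so is $C$.
   Context: For a monoid $B$, $KB$ is the monoid ring with augmentation $\varepsilon:KB\to K$, $b\mapsto 1$. A module is of type $FP_n$ if there is an exact sequence $0\leftarrow M\leftarrow P_0\leftarrow\cdots\leftarrow P_n$ with $P_0,\dots,P_n$ finitely generated free modules. $B$ is left-$FP_n$ (resp. right-$FP_n$) if $K$ as a left (resp. right) $KB$-module via $\varepsilon$ is of type $FP_n$. $(KB,KB)$-bimodules are abelian groups with commuting left and right actions and $km=mk$ for $k\in K$; the free bimodule of rank $r$ is a direct sum of $r$ copies of $KB\otimes_K KB$ (action $a(u\otimes v)b=au\otimes vb$). $B$ is weak bi-$FP_n$ if the bimodule $K$ (action $a\cdot k\cdot a'=\varepsilon(a)k\varepsilon(a')$) has a partial resolution $0\leftarrow K\leftarrow F_0\leftarrow\cdots\leftarrow F_n$ by finitely generated free bimodules; $B$ is bi-$FP_n$ if the bimodule $KB$ (left and right multiplication) has such a partial resolution $0\leftarrow KB\leftarrow F_0\leftarrow\cdots\leftarrow F_n$. *)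

From HB Require Import structures.
From mathcomp Require Import all_boot all_algebra.
From mathcomp Require Import finmap monalg.

Set Implicit Arguments.
Unset Strict Implicit.
Unset Printing Implicit Defensive.

Import GRing.Theory.

Local Open Scope fset_scope.
Local Open Scope ring_scope.

Section MonoidConstructions.
Variable B : monoidType.

Definition mopp : Type := B.
HB.instance Definition _ := Choice.on mopp.
Definition mopp_mul (x y : mopp) : mopp := ((y : B) * (x : B))%g.
Fact mopp_mulA : associative mopp_mul.
Proof. by move=> x y z; rewrite /mopp_mul mulgA. Qed.
Fact mopp_mul1 : left_id (1%g : B) mopp_mul.
Proof. by move=> x; rewrite /mopp_mul mulg1. Qed.
Fact mopp_mulr1 : right_id (1%g : B) mopp_mul.
Proof. by move=> x; rewrite /mopp_mul mul1g. Qed.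
HB.instance Definition _ := isMonoid.Build mopp mopp_mulA mopp_mul1 mopp_mulr1.

Definition menv : Type := (B * B)%type.
HB.instance Definition _ := Choice.on menv.
Definition menv_mul (x y : menv) : menv := ((x.1 * y.1)%g, (y.2 * x.2)%g).
Definition menv_one : menv := (1%g, 1%g).
Fact menv_mulA : associative menv_mul.
Proof. by move=> [a a'] [b b'] [c c']; rewrite /menv_mul /= !mulgA. Qed.
Fact menv_mul1 : left_id menv_one menv_mul.
Proof. by move=> [a a']; rewrite /menv_mul /= mul1g mulg1. Qed.
Fact menv_mulr1 : right_id menv_one menv_mul.
Proof. by move=> [a a']; rewrite /menv_mul /= mul1g mulg1. Qed.
HB.instance Definition _ := isMonoid.Build menv menv_mulA menv_mul1 menv_mulr1.

End MonoidConstructions.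

Section MonoidRing.
Variables (K : comPzRingType) (B : monoidType).

Definition mring : Type := malg B K.
HB.instance Definition _ := GRing.Zmodule.on mring.

Implicit Types (g : mring) (k l : B).

Definition mr_one : mring := << (1 : K) *g (1%g : B) >>.

Local Notation "g1 *M_[ k1 , k2 ] g2" :=
  (<< g1@_k1 * g2@_k2 *g (k1 * k2)%g >> : mring)
  (at level 40, no associativity, format "g1  *M_[ k1 ,  k2 ]  g2").

Definition mr_mul g1 g2 : mring :=
  \sum_(k1 <- msupp g1) \sum_(k2 <- msupp g2) g1 *M_[k1, k2] g2.

Lemma mr_mullw (d1 d2 : {fset B}) g1 g2 :
  msupp g1 `<=` d1 -> msupp g2 `<=` d2 ->
  mr_mul g1 g2 = \sum_(k1 <- d1) \sum_(k2 <- d2) g1 *M_[k1, k2] g2.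
Proof.
move=> le_d1 le_d2; rewrite /mr_mul (big_fset_incl _ le_d1) /=.
  apply/eq_bigr=> k1 _; apply/big_fset_incl => // k _ /mcoeff_outdom ->.
  by rewrite mulr0 monalgU0.
move=> k _ /mcoeff_outdom g1k.
by rewrite big1 => // k' _; rewrite g1k mul0r monalgU0.
Qed.

Lemma mr_mulrw (d1 d2 : {fset B}) g1 g2 : msupp g1 `<=` d1 -> msupp g2 `<=` d2
  -> mr_mul g1 g2 = \sum_(k2 <- d2) \sum_(k1 <- d1) g1 *M_[k1, k2] g2.
Proof. by move=> le_d1 le_d2; rewrite (mr_mullw le_d1 le_d2) exchange_big. Qed.

Lemma mr_mul0g : left_zero 0 mr_mul.
Proof. by move=> g; rewrite /mr_mul msupp0 big_seq_fset0. Qed.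

Lemma mr_mulg0 : right_zero 0 mr_mul.
Proof.
by move=> g; rewrite /mr_mul exchange_big /= msupp0 big_seq_fset0.
Qed.

Lemma mr_mulUg c k g :
  mr_mul << c *g k >> g = \sum_(k' <- msupp g) << c * g@_k' *g (k * k')%g >>.
Proof.
rewrite (mr_mullw msuppU_le (fsubset_refl _)) big_seq_fset1.
by apply/eq_bigr => k' _; rewrite mcoeffUU.
Qed.

Lemma mr_mulgU c k g :
  mr_mul g << c *g k >> = \sum_(k' <- msupp g) << g@_k' * c *g (k' * k)%g >>.
Proof.
rewrite (mr_mulrw (fsubset_refl _) msuppU_le) big_seq_fset1.
by apply/eq_bigr=> k' _; rewrite mcoeffUU.
Qed.

Lemma mr_mulUU c1 c2 k1 k2 :
  mr_mul << c1 *g k1 >> << c2 *g k2 >> = << c1 * c2 *g (k1 * k2)%g >>.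
Proof. by rewrite (mr_mulrw msuppU_le msuppU_le) !big_seq_fset1 !mcoeffUU. Qed.

Lemma mr_mulEl1 g1 g2 :
  mr_mul g1 g2 = \sum_(k1 <- msupp g1) mr_mul << g1@_k1 *g k1 >> g2.
Proof. by apply/eq_bigr=> k _; rewrite mr_mulUg. Qed.

Lemma mr_mulEr1 g1 g2 :
  mr_mul g1 g2 = \sum_(k2 <- msupp g2) mr_mul g1 << g2@_k2 *g k2 >>.
Proof.
rewrite {1}/mr_mul exchange_big /=.
by apply/eq_bigr=> k _; rewrite (mr_mulgU (g2@_k) k g1).
Qed.

Lemma mr_mul1g : left_id mr_one mr_mul.
Proof.
move=> g; rewrite /mr_one mr_mulUg [RHS]monalgE.
by apply/eq_bigr=> kg _; rewrite mul1r mul1g.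
Qed.

Lemma mr_mulg1 : right_id mr_one mr_mul.
Proof.
move=> g; rewrite /mr_one mr_mulgU [RHS]monalgE.
by apply/eq_bigr=> k _; rewrite mulr1 mulg1.
Qed.

Lemma mr_mulgDl : left_distributive mr_mul +%R.
Proof.
move=> g1 g2 g.
rewrite [in RHS](@mr_mullw _ (msupp g) _ _ (fsubsetUl _ (msupp g2)) (fsubset_refl _)).
rewrite [in RHS](@mr_mullw _ (msupp g) _ _ (fsubsetUr (msupp g1) _) (fsubset_refl _)).
rewrite (@mr_mullw _ (msupp g) _ _ (msuppD_le _ _) (fsubset_refl _)).
rewrite -big_split /=; apply/eq_bigr=> k1 _.
rewrite -big_split /=; apply/eq_bigr=> k2 _.
by rewrite mcoeffD mulrDl monalgUD.
Qed.

Lemma mr_mulgDr : right_distributive mr_mul +%R.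
Proof.
move=> g g1 g2.
rewrite [in RHS](@mr_mulrw (msupp g) _ _ _ (fsubset_refl _) (fsubsetUl _ (msupp g2))).
rewrite [in RHS](@mr_mulrw (msupp g) _ _ _ (fsubset_refl _) (fsubsetUr (msupp g1) _)).
rewrite (@mr_mulrw (msupp g) _ _ _ (fsubset_refl _) (msuppD_le _ _)).
rewrite -big_split /=; apply/eq_bigr => k1 _.
rewrite -big_split /=; apply/eq_bigr => k2 _.
by rewrite mcoeffD mulrDr monalgUD.
Qed.

Lemma mr_mulA : associative mr_mul.
Proof.
move=> g1 g2 g3.
rewrite [RHS](big_morph (mr_mul^~ _) (fun _ _ => mr_mulgDl _ _ _) (mr_mul0g _)).
rewrite mr_mulEl1; apply/eq_bigr=> k1 _.
rewrite [LHS](big_morph (mr_mul _) (fun _ _ => mr_mulgDr _ _ _) (mr_mulg0 _)).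
rewrite [RHS](big_morph (mr_mul^~ _) (fun _ _ => mr_mulgDl _ _ _) (mr_mul0g _)).
apply/eq_bigr=> k2 _.
rewrite [LHS](big_morph (mr_mul _) (fun _ _ => mr_mulgDr _ _ _) (mr_mulg0 _)).
by rewrite mr_mulEr1; apply/eq_bigr=> k3 _; rewrite !mr_mulUU mulrA mulgA.
Qed.

HB.instance Definition _ := GRing.Zmodule_isPzRing.Build mring
  mr_mulA mr_mul1g mr_mulg1 mr_mulgDl mr_mulgDr.

Definition augm (g : mring) : K := \sum_(b <- msupp g) g@_b.

End MonoidRing.

(* A left R-module is given by an abelian group M with a scalar action  *)
(* [sc : R -> M -> M]; the finitely generated free left R-module of     *)
(* rank r is the row space 'rV[R]_r (with a *: v = (a * v_i)_i).        *)
(* M is of type FP_n if there is an exact sequence                     *)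
(*   0 <- M <-eps- P_0 <-d_0- P_1 <-d_1- ... <-d_(n-1)- P_n             *)
(* of R-linear maps with P_i = 'rV[R]_(r i) free of finite rank.        *)
Definition FPn (R : pzRingType) (M : zmodType) (sc : R -> M -> M) (n : nat)
  : Prop :=
  exists (r : nat -> nat) (eps : 'rV[R]_(r 0) -> M)
         (d : forall i : nat, 'rV[R]_(r i.+1) -> 'rV[R]_(r i)),
    (forall (a : R) (x y : 'rV[R]_(r 0)), eps (a *: x + y) = sc a (eps x) + eps y)
    /\ (forall i (a : R) (x y : 'rV[R]_(r i.+1)), d i (a *: x + y) = a *: d i x + d i y)
    /\ (forall m : M, exists x, eps x = m)
    /\ ((0 < n)%N -> forall x : 'rV[R]_(r 0), eps x = 0 <-> exists y, d 0 y = x)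
    /\ (forall i, (i.+1 < n)%N ->
          forall x : 'rV[R]_(r i.+1), d i x = 0 <-> exists y, d i.+1 y = x).

Section FinitenessProperties.
Variables (K : comPzRingType) (B : monoidType).

(* K as a (left) module over K[A] via the augmentation: a . k = eps(a) k *)
Definition triv_scale (A : monoidType) (a : mring K A) (k : K) : K := augm a * k.

Definition left_FPn (n : nat) : Prop := FPn (@triv_scale B) n.

(* right K B-modules = left K[B^op]-modules *)
Definition right_FPn (n : nat) : Prop := FPn (@triv_scale (mopp B)) n.

(* (K B, K B)-bimodules (with K acting centrally) = left modules over    *)
(* K[B x B^op] (= K B (x)_K (K B)^op), via (b, b') . m = b m b'.        *)
(* The free bimodule K B (x)_K K B of rank 1 corresponds to K[B x B^op]. *)
Definition weak_biFPn (n : nat) : Prop := FPn (@triv_scale (menv B)) n.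

Definition bimod_scale (e : mring K (menv B)) (x : mring K B) : mring K B :=
  \sum_(p <- msupp e)
     ((<< e@_p *g (p.1 : B) >> : mring K B) * x * (<< (1 : K) *g (p.2 : B) >> : mring K B)).

Definition biFPn (n : nat) : Prop := FPn bimod_scale n.

End FinitenessProperties.

(* Extending psi and phi linearly makes K C a ring retract of K B, and each of
   the four modules for C is a retract of the one for B, along additive maps that
   are semilinear with respect to this ring retraction (for the trivial modules
   both maps are the identity of K). So it suffices to show: if Psi : R -> S splits
   Phi : S -> R and the S-module M is such a retract of the R-module N, then N of
   type FP_n over R forces M of type FP_n over S.
   Take a free resolution F of N with matrices D_k. Base change along Psi gives a
   complex of free S-modules onto M that need not be exact; it is repaired by a
   telescope: P_k = S^(r k) (+) P_(k-1), together with R-matrices B_k lifting the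
   identity of M (B_(k+1) D_k = Phi(E_k) B_k). On cycles z of P_k the differential
   E_k acts by (y, z) |-> y Psi(D_k) + z (Psi(B_k) - 1), so a cycle z with
   Phi(z) B_k = y D_k (which exactness of F provides) is the boundary of (Psi y, -z). *)

From HB Require Import structures.
From mathcomp Require Import all_boot all_algebra.
From mathcomp Require Import finmap monalg.
From Stdlib Require Import ClassicalEpsilon.

Set Implicit Arguments.
Unset Strict Implicit.
Unset Printing Implicit Defensive.

(* Importing GRing.Theory would shadow the monoid notion [monoid_morphism] used in
   the statement of theorem3, hence the module. *)
Module MonoidRetract.
Import GRing.Theory.
Local Open Scope ring_scope.

Section LinearForRow.
Variables (A : pzRingType) (W : zmodType) (s : A -> W -> W) (a : nat).
Hypothesis s1 : forall w, s 1 w = w.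

Section LinearForMap.
Variables (f : 'rV[A]_a -> W) (fL : linear_for s f).

Lemma linear_forD : {morph f : x y / x + y}.
Proof. by move=> x y; rewrite -[x in LHS]scale1r fL s1. Qed.

Lemma linear_for0 : f 0 = 0.
Proof. by apply: (@addrI _ (f 0)); rewrite -linear_forD !addr0. Qed.

Lemma linear_forB : {morph f : x y / x - y}.
Proof. by move=> x y; apply: (@addIr _ (f y)); rewrite -linear_forD !subrK. Qed.

Lemma linear_forZ : scalable_for s f.
Proof. by move=> c x; rewrite -[c *: x]addr0 fL linear_for0 addr0. Qed.

End LinearForMap.

Lemma linear_for_delta_eq (f g : 'rV[A]_a -> W) :
    linear_for s f -> linear_for s g ->
  (forall j, f (delta_mx 0 j) = g (delta_mx 0 j)) -> f =1 g.
Proof.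
move=> fL gL fg x; rewrite (row_sum_delta x).
rewrite !(big_morph _ (linear_forD fL) (linear_for0 fL)).
rewrite !(big_morph _ (linear_forD gL) (linear_for0 gL)).
by apply: eq_bigr => j _; rewrite (linear_forZ fL) (linear_forZ gL) fg.
Qed.

End LinearForRow.

Lemma mul_rV_lin1_for (A : pzRingType) a b (f : 'rV[A]_a -> 'rV[A]_b) :
  linear f -> forall u, u *m lin1_mx f = f u.
Proof. by move=> fL; exact: (mul_rV_lin1 (HB.pack f (GRing.isLinear.Build _ _ _ _ f fL))). Qed.

Lemma map_delta_mx (R S : pzRingType) (f : {rmorphism R -> S}) m n i j :
  map_mx f (delta_mx i j : 'M[R]_(m, n)) = delta_mx i j.
Proof. by apply/matrixP=> k l; rewrite !mxE rmorph_nat. Qed.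

Section PreimageMatrix.
Variables (A : pzRingType) (W : Type) (a m : nat).
Variables (f : 'rV[A]_a -> W) (w : 'I_m -> W).

Definition preimage_mx : 'M[A]_(m, a) :=
  \matrix_j epsilon (inhabits 0) (fun y => f y = w j).

Lemma preimage_mxP j : (exists y, f y = w j) -> f (row j preimage_mx) = w j.
Proof. by rewrite rowK; apply: epsilon_spec. Qed.

End PreimageMatrix.

Section RetractFPn.
Variables (R S : pzRingType) (Phi : {rmorphism S -> R}) (Psi : {rmorphism R -> S}).
Hypothesis PhiK : cancel Phi Psi.
Variables (N M : zmodType) (scN : R -> N -> N) (scM : S -> M -> M).
Hypotheses (scN1 : forall x, scN 1 x = x) (scM1 : forall m, scM 1 m = m).
Variables (i : {additive M -> N}) (p : {additive N -> M}).
Hypotheses (i_scale : forall s m, i (scM s m) = scN (Phi s) (i m))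
           (p_scale : forall r x, p (scN r x) = scM (Psi r) (p x))
           (iK : cancel i p).

Lemma map_mxK m k : cancel (@map_mx _ _ Phi m k) (map_mx Psi).
Proof. by move=> X; apply/matrixP=> a b; rewrite !mxE PhiK. Qed.

Lemma map_mx_PsiPhiM m k l (Z : 'M_(m, k)) (X : 'M_(k, l)) :
  map_mx Psi (map_mx Phi Z *m X) = Z *m map_mx Psi X.
Proof. by rewrite map_mxM map_mxK. Qed.

Section Resolution.
Variables (n : nat) (r : nat -> nat) (eps : 'rV[R]_(r 0) -> N)
  (d : forall k, 'rV[R]_(r k.+1) -> 'rV[R]_(r k)).
Arguments d : clear implicits.
Hypotheses (epsL : linear_for scN eps) (dL : forall k, linear (d k))
  (eps_onto : forall x, exists y, eps y = x)
  (exact0 : (0 < n)%N -> forall y, eps y = 0 <-> exists z, d 0 z = y)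
  (exactS : forall k, (k.+1 < n)%N ->
     forall y, d k y = 0 <-> exists z, d k.+1 z = y).

Definition dmx k := lin1_mx (d k).

Lemma dmxE k y : d k y = y *m dmx k.
Proof. by rewrite mul_rV_lin1_for. Qed.

Lemma dmx_complex k : (k.+1 < n)%N -> dmx k.+1 *m dmx k = 0.
Proof.
move=> lt_kn; apply/row_matrixP => j; rewrite row0 row_mul rowE -!dmxE.
by apply/(exactS lt_kn); exists (delta_mx 0 j).
Qed.

Definition lift_rows k m (Y : 'M[R]_(m, r k)) : 'M[R]_(m, r k.+1) :=
  preimage_mx (fun z => z *m dmx k) (fun j => row j Y).

Lemma lift_rowsK k m (Y : 'M_(m, r k)) :
  (forall j, exists z, z *m dmx k = row j Y) -> lift_rows Y *m dmx k = Y.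
Proof.
move=> Yim; apply/row_matrixP => j; rewrite row_mul.
exact: (preimage_mxP (f := fun z => z *m dmx k) (w := fun j => row j Y)).
Qed.

Lemma lift_rowsK0 m (Y : 'M_(m, r 0)) : (0 < n)%N ->
  (forall j, eps (row j Y) = 0) -> lift_rows Y *m dmx 0 = Y.
Proof.
move=> n_gt0 Yker; apply: lift_rowsK => j.
by have [z <-] := proj1 (exact0 n_gt0 _) (Yker j); exists z; rewrite dmxE.
Qed.

Lemma lift_rowsKS k m (Y : 'M_(m, r k.+1)) : (k.+1 < n)%N ->
  Y *m dmx k = 0 -> lift_rows Y *m dmx k.+1 = Y.
Proof.
move=> lt_kn YD0; apply: lift_rowsK => j.
have [|z <-] := proj1 (exactS lt_kn (row j Y)); first by rewrite dmxE -row_mul YD0 row0.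
by exists z; rewrite dmxE.
Qed.

Definition epsS (z : 'rV[S]_(r 0)) : M := p (eps (map_mx Phi z)).

Lemma epsS_linear : linear_for scM epsS.
Proof. by move=> a x y; rewrite /epsS map_mxD map_mxZ epsL raddfD p_scale PhiK. Qed.

Lemma epsS_Psi v : epsS (map_mx Psi v) = p (eps v).
Proof.
apply: (@linear_for_delta_eq _ _ (fun a => scM (Psi a)) _ _
  (fun v => epsS (map_mx Psi v)) (fun v => p (eps v))) => [m|a x y|a x y|j].
- by rewrite rmorph1 scM1.
- by rewrite map_mxD map_mxZ epsS_linear.
- by rewrite epsL raddfD p_scale.
- by rewrite /epsS !map_delta_mx.
Qed.

Fixpoint srank_below k := if k is k'.+1 then (r k' + srank_below k')%N else 0%N.
Definition srank k := (r k + srank_below k)%N.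

Definition incl k : 'M[S]_(r k, srank k) := row_mx 1%:M 0.
Definition shift k : 'M[S]_(srank_below k, srank k) := row_mx 0 1%:M.

Lemma incl_lsub k m (X : 'M_(m, r k)) : lsubmx (X *m incl k) = X.
Proof. by rewrite mul_mx_row mulmx1 row_mxKl. Qed.

Definition saug (z : 'rV[S]_(srank 0)) : M := epsS (lsubmx z).

Lemma saug_linear : linear_for scM saug.
Proof. by move=> a x y; rewrite /saug linearP epsS_linear. Qed.

Lemma saug_onto x : exists z, saug z = x.
Proof.
have [y epsy] := eps_onto (i x).
by exists (map_mx Psi y *m incl 0); rewrite /saug incl_lsub epsS_Psi epsy iK.
Qed.

Definition cmap0 : 'M[R]_(srank 0, r 0) :=
  preimage_mx eps (fun j => i (saug (delta_mx 0 j))).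

Lemma cmap0P z : eps (map_mx Phi z *m cmap0) = i (saug z).
Proof.
apply: (@linear_for_delta_eq _ _ (fun a => scN (Phi a)) _ _
  (fun z => eps (map_mx Phi z *m cmap0)) (fun z => i (saug z))) => [x|a x y|a x y|j].
- by rewrite rmorph1 scN1.
- by rewrite map_mxD map_mxZ mulmxDl -scalemxAl epsL.
- by rewrite saug_linear raddfD i_scale.
- by rewrite map_delta_mx -rowE preimage_mxP.
Qed.

(* P_(k+1) = S^(r k.+1) (+) P_k; the last term of the lower block vanishes on cycles. *)
Definition sdiff_of k (B : 'M[R]_(srank k, r k)) (E : 'M[S]_(srank k, srank_below k))
    : 'M[S]_(srank k.+1, srank k) :=
  col_mx (map_mx Psi (dmx k) *m incl k) (map_mx Psi B *m incl k - 1%:M - E *m shift k).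

Fixpoint stage k : 'M[R]_(srank k, r k) * 'M[S]_(srank k, srank_below k) :=
  if k is k'.+1 then
    let E := sdiff_of (stage k').1 (stage k').2 in
    (lift_rows (map_mx Phi E *m (stage k').1), E)
  else (cmap0, 0).

Definition cmap k := (stage k).1.
Definition sdiff_below k := (stage k).2.
Definition sdiff k := sdiff_of (cmap k) (sdiff_below k).
Definition corr k : 'M[S]_(srank k, srank k) :=
  map_mx Psi (cmap k) *m incl k - 1%:M - sdiff_below k *m shift k.

Lemma sdiff_belowS k : sdiff_below k.+1 = sdiff k.
Proof. by []. Qed.

Lemma incl_sdiff k : incl k.+1 *m sdiff k = map_mx Psi (dmx k) *m incl k.
Proof. by rewrite /incl mul_row_col mul1mx mul0mx addr0. Qed.

Lemma shift_sdiff k : shift k.+1 *m sdiff k = corr k.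
Proof. by rewrite /shift mul_row_col mul1mx mul0mx add0r. Qed.

Lemma cycle_corr k m (Z : 'M_(m, srank k)) : Z *m sdiff_below k = 0 ->
  Z *m corr k = Z *m map_mx Psi (cmap k) *m incl k - Z.
Proof. by move=> Zcyc; rewrite /corr !mulmxBr mulmx1 !mulmxA Zcyc mul0mx subr0. Qed.

Lemma row_mx_sdiff k m Y (Z : 'M_(m, srank k)) : Z *m sdiff_below k = 0 ->
  row_mx Y Z *m sdiff k
    = (Y *m map_mx Psi (dmx k) + Z *m map_mx Psi (cmap k)) *m incl k - Z.
Proof.
by move=> Zcyc; rewrite mul_row_col (cycle_corr Zcyc) mulmxDl !mulmxA addrA.
Qed.

Lemma sdiff_preimage k m (Y : 'M_(m, r k.+1)) (Z : 'M_(m, srank k)) :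
  Z *m sdiff_below k = 0 -> Y *m dmx k = map_mx Phi Z *m cmap k ->
  row_mx (map_mx Psi Y) (- Z) *m sdiff k = Z.
Proof.
move=> Zcyc YD; rewrite row_mx_sdiff ?mulNmx ?Zcyc ?oppr0 //.
by rewrite -map_mxM YD map_mx_PsiPhiM addrN mul0mx sub0r opprK.
Qed.

Lemma saug_sdiff0 : (0 < n)%N -> forall y, saug (y *m sdiff 0) = 0.
Proof.
move=> n_gt0 y; rewrite -(hsubmxK y) row_mx_sdiff ?thinmx0 //.
rewrite -(map_mx_PsiPhiM (lsubmx y)) -(map_mx_PsiPhiM (rsubmx y)) -map_mxD.
rewrite /saug linearB /= (linear_forB scM1 epsS_linear) incl_lsub epsS_Psi.
rewrite (linear_forD scN1 epsL) raddfD cmap0P iK -dmxE.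
by rewrite (proj2 (exact0 n_gt0 _)) ?raddf0 ?add0r ?subrr //; eexists.
Qed.

Definition chain_at k := cmap k.+1 *m dmx k = map_mx Phi (sdiff k) *m cmap k.
Definition complex_at k := sdiff k *m sdiff_below k = 0.

Lemma chain_at0 : (0 < n)%N -> chain_at 0.
Proof.
move=> n_gt0; apply: lift_rowsK0 => // j.
by rewrite row_mul -map_row cmap0P rowE saug_sdiff0 ?raddf0.
Qed.

Lemma complex_atS k : (k.+1 < n)%N -> chain_at k -> complex_at k -> complex_at k.+1.
Proof.
move=> lt_kn chain_k complex_k; rewrite /complex_at mul_col_mx.
rewrite -mulmxA incl_sdiff mulmxA -map_mxM dmx_complex // map_mx0 mul0mx.
rewrite /corr !mulmxBl mul1mx -!mulmxA incl_sdiff shift_sdiff (cycle_corr complex_k).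
by rewrite mulmxA -map_mxM chain_k map_mx_PsiPhiM sdiff_belowS subrr col_mx0.
Qed.

Lemma chain_atS k : (k.+1 < n)%N -> chain_at k -> complex_at k.+1 -> chain_at k.+1.
Proof.
move=> lt_kn chain_k complex_k1; apply: lift_rowsKS => //.
by rewrite -mulmxA chain_k mulmxA -map_mxM complex_k1 map_mx0 mul0mx.
Qed.

Lemma resolution_invariants k : (k < n)%N -> chain_at k /\ complex_at k.
Proof.
elim: k => [n_gt0|k IHk lt_kn].
  by split; [exact: chain_at0 | exact: thinmx0].
have [chain_k complex_k] := IHk (ltnW lt_kn).
have complex_k1 := complex_atS lt_kn chain_k complex_k.
by split; [exact: chain_atS | exact: complex_k1].
Qed.

Lemma saug_ker : (0 < n)%N -> forall z, saug z = 0 -> exists y, y *m sdiff 0 = z.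
Proof.
move=> n_gt0 z saugz.
have [|y yD] := proj1 (exact0 n_gt0 (map_mx Phi z *m cmap 0)).
  by rewrite cmap0P saugz raddf0.
by exists (row_mx (map_mx Psi y) (- z)); apply: sdiff_preimage; rewrite ?thinmx0 -?dmxE.
Qed.

Lemma sdiff_ker k : (k.+1 < n)%N ->
  forall z : 'rV_(srank k.+1), z *m sdiff k = 0 -> exists y, y *m sdiff k.+1 = z.
Proof.
move=> lt_kn z zcyc.
have [|y yD] := proj1 (exactS lt_kn (map_mx Phi z *m cmap k.+1)).
  rewrite dmxE -mulmxA (proj1 (resolution_invariants (ltnW lt_kn))).
  by rewrite mulmxA -map_mxM zcyc map_mx0 mul0mx.
by exists (row_mx (map_mx Psi y) (- z)); apply: sdiff_preimage; rewrite -?dmxE.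
Qed.

Lemma retract_resolution : FPn scM n.
Proof.
exists srank, saug, (fun k (x : 'rV_(srank k.+1)) => x *m sdiff k).
split; first exact: saug_linear.
split; first by move=> k a x y; rewrite mulmxDl scalemxAl.
split; first exact: saug_onto.
split.
  move=> n_gt0 z; split; first exact: saug_ker.
  by case=> y <-; apply: saug_sdiff0.
move=> k lt_kn z; split; first exact: sdiff_ker.
by case=> y <-; rewrite -mulmxA (proj2 (resolution_invariants lt_kn)) mulmx0.
Qed.

End Resolution.

Lemma FPn_retract n : FPn scN n -> FPn scM n.
Proof.
case=> r [eps [d [epsL [dL [eps_onto [exact0 exactS]]]]]].
exact: (retract_resolution epsL dL eps_onto exact0 exactS).
Qed.

End RetractFPn.

Section SupportSum.
Variables (G V : zmodType) (B : choiceType) (F : B -> G -> V).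
Hypothesis F_additive : forall b, zmod_morphism (F b).

Definition msum (g : {malg G[B]}) : V := \sum_(b <- msupp g) F b g@_b.

Lemma msumEw (E : {fset B}) g :
  (msupp g `<=` E)%fset -> msum g = \sum_(b <- E) F b g@_b.
Proof.
move=> le_gE; apply: big_fset_incl => // b _ /mcoeff_outdom ->.
by rewrite -[0 in LHS](subrr 0) F_additive subrr.
Qed.

Lemma msumU c b : msum << c *g b >> = F b c.
Proof. by rewrite (msumEw msuppU_le) big_seq_fset1 mcoeffUU. Qed.

Lemma msum_is_additive : zmod_morphism msum.
Proof.
move=> g1 g2; rewrite (msumEw (msuppB_le g1 g2)).
rewrite (msumEw (fsubsetUl _ (msupp g2))) (msumEw (fsubsetUr (msupp g1) _)).
by rewrite -sumrB; apply: eq_bigr => b _; rewrite mcoeffB F_additive.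
Qed.

HB.instance Definition _ := GRing.isZmodMorphism.Build _ _ msum msum_is_additive.

Lemma msum_sum (I : Type) (s : seq I) (g : I -> {malg G[B]}) :
  msum (\sum_(j <- s) g j) = \sum_(j <- s) msum (g j).
Proof. exact: raddf_sum. Qed.

End SupportSum.

Section Augmentation.
Variables (K : comPzRingType) (B : monoidType).

Lemma augm_is_additive : zmod_morphism (@augm K B).
Proof. exact: (@msum_is_additive _ _ _ (fun _ c => c)). Qed.

HB.instance Definition _ := GRing.isZmodMorphism.Build _ _ (@augm K B) augm_is_additive.

Lemma augmU c b : augm (<< c *g b >> : mring K B) = c.
Proof. exact: (@msumU _ _ _ (fun _ c => c)). Qed.

Lemma triv_scale1 x : triv_scale (1 : mring K B) x = x.
Proof. by rewrite /triv_scale augmU mul1r. Qed.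

End Augmentation.

Section MonoidRingMap.
Variables (K : comPzRingType) (B C : monoidType) (f : B -> C).

Definition mring_map : mring K B -> mring K C := msum (fun b c => << c *g f b >>).

Lemma mring_mapE g : mring_map g = \sum_(b <- msupp g) << g@_b *g f b >>.
Proof. by []. Qed.

Lemma mring_map_is_additive : zmod_morphism mring_map.
Proof. by apply: msum_is_additive => b; apply: monalgUB. Qed.

HB.instance Definition _ :=
  GRing.isZmodMorphism.Build _ _ mring_map mring_map_is_additive.

Lemma mring_mapU c b : mring_map << c *g b >> = << c *g f b >>.
Proof. by apply: msumU => b'; apply: monalgUB. Qed.

Lemma augm_mring_map g : augm (mring_map g) = augm g.
Proof. by rewrite mring_mapE raddf_sum [RHS]/augm; apply: eq_bigr => b _; apply: augmU. Qed.

Hypothesis fM : monoid.monoid_morphism f.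

Lemma mring_mapM : {morph mring_map : g1 g2 / g1 * g2}.
Proof.
move=> g1 g2; rewrite -[g1 * g2]/(mr_mul g1 g2) /mr_mul raddf_sum.
rewrite [mring_map g1]mring_mapE [mring_map g2]mring_mapE mulr_suml.
apply: eq_bigr => b1 _; rewrite raddf_sum mulr_sumr; apply: eq_bigr => b2 _.
by rewrite -[LHS]/(mring_map _) mring_mapU fM.2; apply/esym/mr_mulUU.
Qed.

Lemma mring_map_monoid_morphism : GRing.monoid_morphism mring_map.
Proof. by split; [rewrite mring_mapU fM.1 | exact: mring_mapM]. Qed.

Definition mring_rmorphism : {rmorphism mring K B -> mring K C} :=
  HB.pack mring_map (GRing.isMonoidMorphism.Build _ _ _ mring_map_monoid_morphism).

End MonoidRingMap.

Lemma mring_mapK (K : comPzRingType) (B C : monoidType) (f : B -> C) (g : C -> B) :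
  cancel g f -> cancel (@mring_map K _ _ g) (mring_map f).
Proof.
move=> gK x; rewrite [mring_map g x]mring_mapE raddf_sum [RHS]monalgE.
by apply: eq_bigr => c _; rewrite -[LHS]/(mring_map f _) mring_mapU gK.
Qed.

Lemma mopp_monoid_morphism (B C : monoidType) (f : B -> C) :
  monoid.monoid_morphism f -> monoid.monoid_morphism (f : mopp B -> mopp C).
Proof. by case=> f1 fM; split=> // x y; rewrite /= /mopp_mul fM. Qed.

Definition menv_map (B C : monoidType) (f : B -> C) (q : menv B) : menv C :=
  (f q.1, f q.2).

Lemma menv_map_monoid_morphism (B C : monoidType) (f : B -> C) :
  monoid.monoid_morphism f -> monoid.monoid_morphism (menv_map f).
Proof. by case=> f1 fM; split=> [|x y]; rewrite /menv_map /= ?f1 ?fM. Qed.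

Lemma menv_mapK (B C : monoidType) (f : B -> C) (g : C -> B) :
  cancel g f -> cancel (menv_map g) (menv_map f).
Proof. by move=> gK [x y]; rewrite /menv_map /= !gK. Qed.

Lemma triv_scale_FPn_retract (K : comPzRingType) (B C : monoidType)
    (psi : B -> C) (phi : C -> B) :
  monoid.monoid_morphism psi -> monoid.monoid_morphism phi -> cancel phi psi ->
  forall n, FPn (@triv_scale K B) n -> FPn (@triv_scale K C) n.
Proof.
move=> psiM phiM phiK n.
apply: (@FPn_retract _ _ (mring_rmorphism K phiM) (mring_rmorphism K psiM) _ _ _ _ _
  _ _ idfun idfun) => //; try exact: triv_scale1.
- exact: mring_mapK.
- by move=> s x; rewrite /triv_scale augm_mring_map.
- by move=> s x; rewrite /triv_scale augm_mring_map.
Qed.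

Section BimoduleScale.
Variables (K : comPzRingType) (B : monoidType).
Implicit Types (x : mring K B) (e : mring K (menv B)).

Definition bimod_term (x : mring K B) (q : menv B) (c : K) : mring K B :=
  (<< c *g q.1 >> : mring K B) * x * << 1 *g q.2 >>.

Lemma bimod_term_additive x q : zmod_morphism (bimod_term x q).
Proof. by move=> c c'; rewrite /bimod_term monalgUB !mulrBl. Qed.

Lemma bimod_scaleE e x : bimod_scale e x = msum (bimod_term x) e.
Proof. by []. Qed.

Lemma bimod_scaleU c q x : bimod_scale << c *g q >> x = bimod_term x q c.
Proof. by rewrite bimod_scaleE msumU //; apply: bimod_term_additive. Qed.

Lemma bimod_scale1 x : bimod_scale 1 x = x.
Proof. by rewrite -[1]/(mr_one K (menv B)) bimod_scaleU /bimod_term mul1r mulr1. Qed.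

End BimoduleScale.

Lemma mring_map_bimod_scale (K : comPzRingType) (B C : monoidType) (f : B -> C) :
  monoid.monoid_morphism f -> forall (e : mring K (menv B)) (x : mring K B),
  mring_map f (bimod_scale e x) = bimod_scale (mring_map (menv_map f) e) (mring_map f x).
Proof.
move=> fM e x; rewrite !bimod_scaleE [msum _ e]/msum raddf_sum [mring_map _ e]mring_mapE.
rewrite msum_sum; last exact: bimod_term_additive.
apply: eq_bigr => q _; rewrite -[LHS]/(mring_map f _) /bimod_term !(mring_mapM fM).
by rewrite !mring_mapU msumU //; apply: bimod_term_additive.
Qed.

Lemma bimod_scale_FPn_retract (K : comPzRingType) (B C : monoidType)
    (psi : B -> C) (phi : C -> B) :
  monoid.monoid_morphism psi -> monoid.monoid_morphism phi -> cancel phi psi ->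
  forall n, FPn (@bimod_scale K B) n -> FPn (@bimod_scale K C) n.
Proof.
move=> psiM phiM phiK n.
apply: (@FPn_retract _ _ (mring_rmorphism K (menv_map_monoid_morphism phiM))
  (mring_rmorphism K (menv_map_monoid_morphism psiM)) _ _ _ _ _ _ _
  (mring_map phi) (mring_map psi)) => //; try exact: bimod_scale1.
- exact/mring_mapK/menv_mapK.
- by move=> s x; apply: mring_map_bimod_scale.
- by move=> s x; apply: mring_map_bimod_scale.
- exact: mring_mapK.
Qed.

End MonoidRetract.
Import MonoidRetract.

Theorem theorem3 (K : comPzRingType) (n : nat) (B C : monoidType)
    (psi : B -> C) (phi : C -> B) :
  monoid_morphism psi -> monoid_morphism phi ->
  (forall c : C, psi (phi c) = c) ->
  (left_FPn K B n -> left_FPn K C n) /\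
  (right_FPn K B n -> right_FPn K C n) /\
  (biFPn K B n -> biFPn K C n) /\
  (weak_biFPn K B n -> weak_biFPn K C n).
Proof.
move=> psiM phiM phiK; split; first exact: triv_scale_FPn_retract psiM phiM phiK n.
split; first exact: (triv_scale_FPn_retract (mopp_monoid_morphism psiM)
  (mopp_monoid_morphism phiM) phiK).
split; first exact: bimod_scale_FPn_retract psiM phiM phiK n.
exact: (triv_scale_FPn_retract (menv_map_monoid_morphism psiM)
  (menv_map_monoid_morphism phiM) (menv_mapK phiK)).
Qed.
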